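(* Let $p_1,p_2,q$ be non-negative integers, $k$ an integer and $x_1,x_2\in\mathbb{C}$. Define rational functions $\mathcal{R}_{\mu,k}(y)$ for integers $\mu\ge -1$ by $\mathcal{R}_{-1,k}(y)=-1$ and, for $\mu\ge 0$, $$\mathcal{R}_{\mu,k}(y)=y(y+\mu+2)^{k}\mathcal{R}_{\mu-1,k}(y)-(y+1)^{k+1}\mathcal{R}_{\mu-1,k}(y+1).$$ Then $$\sum_{l=0}^{q}\binom{q}{l}(-x_1)^{q-l}B^{(k)}_{p_1+l,p_2}(x_1,x_2)=\sum_{l=0}^{q}\binom{q}{l}(-x_2)^{q-l}B^{(k)}_{p_1,p_2+l}(x_1,x_2)=-\sum_{l=0}^{p_1+p_2}S_{1,x_1}^{1,x_2,p_2}(p_1,l)\,\frac{(-1)^{l}\,l!\,\mathcal{R}_{q-1,k}(l)}{\left(\prod_{i=1}^{q+1}(l+i)\right)^{k}}.$$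
   Context: For non-negative integers $p_1,p_2,l$ and $x_1,x_2\in\mathbb{C}$, the generalized Stirling numbers are $$S_{1,x_1}^{1,x_2,p_2}(p_1,l)=\frac{1}{l!}\sum_{j=0}^{l}(-1)^{j}\binom{l}{j}(l-j+x_1)^{p_1}(l-j+x_2)^{p_2}.$$ For an integer $k$, the bi-variate poly-Bernoulli polynomial is $$B^{(k)}_{p_1,p_2}(x_1,x_2)=\sum_{l=0}^{p_1+p_2}S_{1,x_1}^{1,x_2,p_2}(p_1,l)\frac{(-1)^{l}\,l!}{(l+1)^{k}}.$$ *)

From HB Require Import structures.
From mathcomp Require Import all_boot all_order all_algebra.
From mathcomp Require Import reals.
From mathcomp Require Export complex.
Set Implicit Arguments. Unset Strict Implicit. Unset Printing Implicit Defensive.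
Import Order.TTheory GRing.Theory Num.Theory.
Local Open Scope ring_scope.

Section Defs.
Variable F : fieldType.

Definition gstirling (p1 p2 l : nat) (x1 x2 : F) : F :=
  (l`!%:R)^-1 * \sum_(j < l.+1)
     ((-1) ^+ j * 'C(l, j)%:R * ((l - j)%:R + x1) ^+ p1 * ((l - j)%:R + x2) ^+ p2).

Definition polyBern (k : int) (p1 p2 : nat) (x1 x2 : F) : F :=
  \sum_(l < (p1 + p2).+1)
     gstirling p1 p2 l x1 x2 * ((-1) ^+ l * l`!%:R / (l.+1%:R ^ k)).

(* Rcal n k y = \mathcal{R}_{n-1,k}(y) (index shifted by one):
   Rcal 0 = R_{-1} = -1 ;
   R_{mu,k}(y) = y (y+mu+2)^k R_{mu-1,k}(y) - (y+1)^{k+1} R_{mu-1,k}(y+1). *)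
Fixpoint Rcal (n : nat) (k : int) (y : F) : F :=
  match n with
  | 0 => -1
  | m.+1 => y * (y + (m + 2)%:R) ^ k * Rcal m k y
            - (y + 1) ^ (k + 1) * Rcal m k (y + 1)
  end.
End Defs.

From HB Require Import structures.
From mathcomp Require Import all_boot all_order all_algebra.
From mathcomp Require Import reals complex.
From mathcomp Require Import ring.
Import Order.TTheory GRing.Theory Num.Theory.
Local Open Scope ring_scope.

(* Write  fdiff g l = \sum_j (-1)^j C(l,j) g(l-j)  for the l-th
   forward difference at 0 of a sequence g.  Then l! S(p1,l) is the l-th
   difference of  m |-> (m+x1)^p1 (m+x2)^p2, so every B^{(k)} is a weighted
   sum  wsum N g w = \sum_(l<=N) (-1)^l (fdiff g l) w(l)  with the weight
   bern_weight(l) = (l+1)^(-k).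
   1. Differences of order > L of a polynomial of degree L vanish, so such
      weighted sums may be truncated at any N >= L.
   2. (Summation by parts.)  Multiplying g by m changes the weight w into
      weight_step w = (l |-> l w(l) - (l+1) w(l+1)); iterating, multiplying g
      by m^q gives the weight  weight_step^q w.
   3. By the binomial theorem, \sum_l C(q,l) (-x)^(q-l) (m+x)^l = m^q; with
      x = x1 or x = x2 both left-hand sides therefore equal the weighted sum
      of (m+x1)^p1 (m+x2)^p2 against weight_step^q bern_weight.
   4. Induction on q identifies  weight_step^q bern_weight (l)  with
      - R_{q-1,k}(l) / ((l+1)...(l+q+1))^k, which is the right-hand side. *)

Section ForwardDifference.
Context {R : comPzRingType}.

Definition fdiff (g : nat -> R) (l : nat) : R :=
  \sum_(j < l.+1) (-1) ^+ j * 'C(l, j)%:R * g (l - j)%N.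

Lemma eq_fdiff {g h : nat -> R} l : g =1 h -> fdiff g l = fdiff h l.
Proof. by move=> eq_gh; apply: eq_bigr => j _; rewrite eq_gh. Qed.

Lemma fdiff_sum n (c : nat -> R) (h : nat -> nat -> R) l :
  fdiff (fun m => \sum_(i < n) c i * h i m) l = \sum_(i < n) c i * fdiff (h i) l.
Proof.
rewrite /fdiff; under eq_bigr do rewrite mulr_sumr.
rewrite exchange_big /=; apply: eq_bigr => i _.
by rewrite mulr_sumr; apply: eq_bigr => j _; ring.
Qed.

Lemma fdiffD (a b : R) (g h : nat -> R) l :
  fdiff (fun m => a * g m + b * h m) l = a * fdiff g l + b * fdiff h l.
Proof.
by rewrite /fdiff !mulr_sumr -big_split /=; apply: eq_bigr => j _; ring.
Qed.

(* Pascal's rule, read on the difference of the shifted sequence. *)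
Lemma fdiff_pascal (g : nat -> R) n :
  \sum_(j < n.+2) (-1) ^+ j * 'C(n, j)%:R * g (n.+1 - j)%N
  = fdiff g n.+1 + fdiff g n.
Proof.
rewrite /fdiff big_ord_recl [in RHS]big_ord_recl /= !subn0 !bin0 -addrA.
congr (_ + _); rewrite -big_split /=; apply: eq_bigr => j _.
by rewrite /bump /= add1n subSS binS natrD exprS; ring.
Qed.

Lemma fdiff_mulX (g : nat -> R) l :
  fdiff (fun m => m%:R * g m) l = l%:R * (fdiff g l + fdiff g l.-1).
Proof.
case: l => [|n]; first by rewrite /fdiff big_ord1 /= !mul0r mulr0.
rewrite -fdiff_pascal /fdiff mulr_sumr; apply: eq_bigr => j _.
have /(congr1 (fun t => t%:R : R)) := mul_bin_down n.+1 j.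
rewrite !natrM => bin_down.
transitivity ((-1) ^+ j * ((n.+1 - j)%:R * 'C(n.+1, j)%:R) * g (n.+1 - j)%N).
  by ring.
by rewrite -bin_down; ring.
Qed.

(* All differences of order > L vanish: "g is polynomial of degree <= L". *)
Definition fdiff_vanishes (g : nat -> R) (L : nat) : Prop :=
  forall l, (L < l)%N -> fdiff g l = 0.

Lemma fdiff_vanishes_const : fdiff_vanishes (fun=> 1) 0.
Proof.
case=> // n _; have := exprDn (1 : R) (-1) n.+1.
rewrite subrr expr0n /= => binom; apply: esym; apply: (etrans binom).
by apply: eq_bigr => j _; rewrite expr1n mul1r mulr1 mulr_natr.
Qed.

Lemma fdiff_vanishes_mul_linear {g L} x :
  fdiff_vanishes g L -> fdiff_vanishes (fun m => g m * (m%:R + x)) L.+1.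
Proof.
move=> van l ltLl.
rewrite (@eq_fdiff _ (fun m => 1 * (m%:R * g m) + x * g m)); last by move=> m; ring.
rewrite fdiffD fdiff_mulX (van l) ?(van l.-1); first by ring.
- by case: l ltLl => // l; rewrite ltnS.
- exact: ltn_trans ltLl.
Qed.

Lemma fdiff_vanishes_mul_pow {g L} x a :
  fdiff_vanishes g L -> fdiff_vanishes (fun m => g m * (m%:R + x) ^+ a) (L + a).
Proof.
move=> van; elim: a => [|a IH] l.
  by rewrite addn0 => /van <-; apply: eq_fdiff => m; rewrite mulr1.
rewrite addnS => /(fdiff_vanishes_mul_linear x IH).
by rewrite (@eq_fdiff _ (fun m => g m * (m%:R + x) ^+ a.+1)) // => m; rewrite exprSr mulrA.
Qed.

Definition wsum (N : nat) (g w : nat -> R) : R :=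
  \sum_(l < N.+1) (-1) ^+ l * fdiff g l * w l.

Lemma eq_wsum N {g h} (w : nat -> R) : g =1 h -> wsum N g w = wsum N h w.
Proof. by move=> eq_gh; apply: eq_bigr => l _; rewrite (eq_fdiff _ eq_gh). Qed.

Lemma wsum_sum N n (c : nat -> R) (h : nat -> nat -> R) w :
  wsum N (fun m => \sum_(i < n) c i * h i m) w = \sum_(i < n) c i * wsum N (h i) w.
Proof.
rewrite /wsum; under eq_bigr do rewrite fdiff_sum mulr_sumr mulr_suml.
rewrite exchange_big /=; apply: eq_bigr => i _.
by rewrite mulr_sumr; apply: eq_bigr => j _; ring.
Qed.

Lemma wsum_trunc {g L} N w :
  fdiff_vanishes g L -> (L <= N)%N -> wsum N g w = wsum L g w.
Proof.
move=> van; elim: N => [|N IH]; first by rewrite leqn0 => /eqP ->.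
rewrite leq_eqVlt => /orP [/eqP -> //|]; rewrite ltnS => leLN.
rewrite /wsum big_ord_recr /= -/(wsum N g w) IH //.
by rewrite (van N.+1) ?ltnS // mulr0 mul0r addr0.
Qed.

(* The transformation of weights dual to multiplication by m. *)
Definition weight_step (w : nat -> R) (l : nat) : R :=
  l%:R * w l - l.+1%:R * w l.+1.

(* Summation by parts: multiplying g by m turns w into weight_step w,
   up to a boundary term at N. *)
Lemma wsum_mulX N g w :
  wsum N (fun m => m%:R * g m) w
  = wsum N g (weight_step w) + (-1) ^+ N * N.+1%:R * fdiff g N * w N.+1.
Proof.
elim: N => [|N IH]; first by rewrite /wsum !big_ord1 /= fdiff_mulX /weight_step /=; ring.
rewrite /wsum big_ord_recr /= -/(wsum N _ w) IH.
rewrite [in RHS]big_ord_recr /= -/(wsum N g (weight_step w)) fdiff_mulX.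
by rewrite /weight_step /= !exprS; ring.
Qed.

(* If g has degree <= L, the boundary terms vanish and m^q is absorbed
   into the q-th iterate of weight_step. *)
Lemma wsum_mulXn g L q w : fdiff_vanishes g L ->
  wsum (L + q) (fun m => g m * m%:R ^+ q) w = wsum L g (iter q weight_step w).
Proof.
move=> van; elim: q w => [|q IH] w.
  by rewrite addn0; apply: eq_wsum => m; rewrite mulr1.
have van_q : fdiff_vanishes (fun m => g m * m%:R ^+ q) (L + q).
  move=> l /(fdiff_vanishes_mul_pow 0 q van).
  by rewrite (@eq_fdiff _ (fun m => g m * m%:R ^+ q)) // => m; rewrite addr0.
rewrite addnS (@eq_wsum _ _ (fun m => m%:R * (g m * m%:R ^+ q))); last first.
  by move=> m; rewrite exprSr; ring.
rewrite wsum_mulX (van_q (L + q).+1) // mulr0 mul0r addr0.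
by rewrite (wsum_trunc _ _ van_q) // IH iterSr.
Qed.

(* Re-expanding m^q = ((m + x) - x)^q binomially in the sequence. *)
Lemma wsum_binomial {g L} x q w : fdiff_vanishes g L ->
  \sum_(l < q.+1) 'C(q, l)%:R * (- x) ^+ (q - l)
                  * wsum (L + l) (fun m => g m * (m%:R + x) ^+ l) w
  = wsum L g (iter q weight_step w).
Proof.
move=> van; rewrite -wsum_mulXn //.
transitivity (\sum_(l < q.+1) 'C(q, l)%:R * (- x) ^+ (q - l)
                * wsum (L + q) (fun m => g m * (m%:R + x) ^+ l) w).
  apply: eq_bigr => l _; rewrite [in RHS](wsum_trunc _ _ (fdiff_vanishes_mul_pow x l van)) //.
  by rewrite leq_add2l -ltnS.
rewrite -(wsum_sum _ _ (fun l => 'C(q, l)%:R * (- x) ^+ (q - l))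
                     (fun l m => g m * (m%:R + x) ^+ l)).
apply: eq_wsum => m.
have -> : m%:R ^+ q = (- x + (m%:R + x)) ^+ q by congr (_ ^+ _); ring.
by rewrite exprDn mulr_sumr; apply: eq_bigr => l _; rewrite -mulr_natr; ring.
Qed.

End ForwardDifference.

Section PolyBernoulli.
Variable F : numFieldType.

Lemma natS_neq0 n : (n.+1%:R : F) != 0.
Proof. by rewrite pnatr_eq0. Qed.

Definition rising (q l : nat) : F := \prod_(1 <= i < q.+2) (l + i)%:R.

Lemma rising_neq0 q l : rising q l != 0.
Proof.
elim: q => [|q IH]; first by rewrite /rising big_nat1 addn1 natS_neq0.
by rewrite /rising big_nat_recr //= mulf_neq0 // addnS natS_neq0.
Qed.

Lemma risingSr q l : rising q.+1 l = rising q l * (l%:R + (q + 2)%:R).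
Proof. by rewrite /rising big_nat_recr //= natrD addn2. Qed.

Lemma risingSl q l : rising q.+1 l = l.+1%:R * rising q l.+1.
Proof.
rewrite /rising big_nat_recl //= addn1; congr (_ * _).
by apply: eq_bigr => i _; rewrite addnS addSn.
Qed.

Definition bern_weight (k : int) (l : nat) : F := (l.+1%:R ^ k)^-1.

Lemma iter_weight_step k q l :
  iter q (@weight_step F) (bern_weight k) l = - Rcal q k (l%:R : F) / rising q l ^ k.
Proof.
elim: q l => [|q IH] l; first by rewrite /= /bern_weight /rising big_nat1 addn1 opprK mul1r.
rewrite iterS /weight_step !IH /= -natr1.
set a : F := (l%:R + (q + 2)%:R) ^ k; set b : F := (l%:R + 1) ^ k.
have a_nz : a != 0 by apply: expfz_neq0; rewrite -natrD addn2 addnS natS_neq0.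
have b_nz : b != 0 by apply: expfz_neq0; rewrite natr1 natS_neq0.
have rise_nz : rising q.+1 l ^ k != 0 by apply: expfz_neq0; apply: rising_neq0.
(* both denominators are divisors of rising q.+1 l ^ k *)
have rise_l : rising q l ^ k = rising q.+1 l ^ k / a by rewrite risingSr expfzMl -/a mulfK.
have rise_Sl : rising q l.+1 ^ k = rising q.+1 l ^ k / b.
  by rewrite risingSl expfzMl -natr1 -/b [b * _]mulrC mulfK.
rewrite rise_l rise_Sl expfzDr ?natr1 ?natS_neq0 // -natr1 -/b expr1z.
by field; rewrite rise_nz a_nz b_nz.
Qed.

Variables x1 x2 : F.

Definition bipow (p1 p2 m : nat) : F := (m%:R + x1) ^+ p1 * (m%:R + x2) ^+ p2.

Lemma bipow_vanishes p1 p2 : fdiff_vanishes (bipow p1 p2) (p1 + p2).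
Proof.
have van := fdiff_vanishes_mul_pow x2 p2 (fdiff_vanishes_mul_pow x1 p1 fdiff_vanishes_const).
rewrite add0n in van; move=> l /van <-.
by apply: eq_fdiff => m; rewrite /bipow mul1r.
Qed.

Lemma gstirling_fdiff p1 p2 l :
  gstirling p1 p2 l x1 x2 = (l`!%:R)^-1 * fdiff (bipow p1 p2) l.
Proof. by congr (_ * _); apply: eq_bigr => j _; rewrite /bipow !mulrA. Qed.

Lemma wsum_gstirling p1 p2 w :
  wsum (p1 + p2) (bipow p1 p2) w
  = \sum_(l < (p1 + p2).+1) gstirling p1 p2 l x1 x2 * ((-1) ^+ l * l`!%:R * w l).
Proof.
apply: eq_bigr => l _; rewrite gstirling_fdiff.
have fact_nz : (l`!%:R : F) != 0 by rewrite pnatr_eq0 -lt0n fact_gt0.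
by field.
Qed.

Lemma polyBern_wsum k p1 p2 :
  polyBern k p1 p2 x1 x2 = wsum (p1 + p2) (bipow p1 p2) (bern_weight k).
Proof. by rewrite wsum_gstirling; apply: eq_bigr => l _; rewrite mulrA. Qed.

Lemma polyBern_binomial_left k p1 p2 q :
  \sum_(l < q.+1) 'C(q, l)%:R * (- x1) ^+ (q - l) * polyBern k (p1 + l) p2 x1 x2
  = wsum (p1 + p2) (bipow p1 p2) (iter q (@weight_step F) (bern_weight k)).
Proof.
rewrite -(wsum_binomial x1 q _ (bipow_vanishes p1 p2)); apply: eq_bigr => l _.
rewrite polyBern_wsum addnAC; congr (_ * _); apply: eq_wsum => m.
by rewrite /bipow exprD; ring.
Qed.

Lemma polyBern_binomial_right k p1 p2 q :
  \sum_(l < q.+1) 'C(q, l)%:R * (- x2) ^+ (q - l) * polyBern k p1 (p2 + l) x1 x2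
  = wsum (p1 + p2) (bipow p1 p2) (iter q (@weight_step F) (bern_weight k)).
Proof.
rewrite -(wsum_binomial x2 q _ (bipow_vanishes p1 p2)); apply: eq_bigr => l _.
rewrite polyBern_wsum addnA; congr (_ * _); apply: eq_wsum => m.
by rewrite /bipow exprD; ring.
Qed.

End PolyBernoulli.

Theorem proposition4p2 (R : realType) (p1 p2 q : nat) (k : int) (x1 x2 : R[i]) :
  \sum_(l < q.+1) 'C(q, l)%:R * (- x1) ^+ (q - l) * polyBern k (p1 + l) p2 x1 x2
  = \sum_(l < q.+1) 'C(q, l)%:R * (- x2) ^+ (q - l) * polyBern k p1 (p2 + l) x1 x2
  /\
  \sum_(l < q.+1) 'C(q, l)%:R * (- x2) ^+ (q - l) * polyBern k p1 (p2 + l) x1 x2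
  = - \sum_(l < (p1 + p2).+1)
        gstirling p1 p2 l x1 x2 *
        ((-1) ^+ l * l`!%:R * Rcal q k (l%:R : R[i])
         / ((\prod_(1 <= i < q.+2) (l + i)%:R : R[i]) ^ k)).
Proof.
rewrite polyBern_binomial_left polyBern_binomial_right; split=> //.
rewrite wsum_gstirling -sumrN; apply: eq_bigr => l _.
by rewrite iter_weight_step /rising; ring.
Qed.
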